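(* For every $n\ge1$, $|\mathcal{T}_n^{(1,n)}|=1$, and for $n\ge2$ and $1\le p\le n-1$, $|\mathcal{T}_n^{(1,p)}|=\sum_{r=1}^{n}|\mathcal{T}_{n-1}^{(r,p)}|$.
   Context: For $m\ge1$, $1\le p\le m$: sites are $0,\dots,m+1$; a configuration in $\mathcal{S}(m,p)$ places $m+1$ distinct chips labeled $1,\dots,m+1$ with sites $0,m+1$ empty, one chip at each site of $\{1,\dots,m\}\setminus\{p\}$ and two chips at site $p$. Toppling: while some site holds at least two chips, choose such a site $i$ and two chips $\alpha<\beta$ there and move $\alpha$ to $i-1$, $\beta$ to $i+1$; it is known this terminates with at most one chip per site and the final configuration is independent of the choices. For $\pi\in S_m$ and $r\in[m+1]$, $\pi^{(r,p)}$ places at site $i$ ($1\le i\le m$) chip $\pi_i$ if $\pi_i<r$ and $\pi_i+1$ otherwise, plus chip $r$ at site $p$. $\mathcal{T}_m^{(r,p)}$ is the set of $\pi\in S_m$ such that the final configuration of $\pi^{(r,p)}$, read left to right, is $1,2,\dots,m+1$. *)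

From mathcomp Require Import all_boot all_order all_algebra all_fingroup.
From mathcomp Require Import boolp.
From Stdlib Require Import Relations.
Set Implicit Arguments. Unset Strict Implicit. Unset Printing Implicit Defensive.
Import Order.TTheory GRing.Theory Num.Theory.
Local Open Scope ring_scope.

(* A configuration of the m+1 labelled chips 1,...,m+1 is encoded by the
   sequence  s  of their sites (integers): s`_k is the site of chip k+1.
   Sites are taken in int so that no boundary condition is imposed. *)
Definition config := seq int.

Definition topple (s s' : config) : Prop :=
  exists a b : nat, [/\ (a < b)%N, (b < size s)%N, s`_a = s`_b &
    s' = set_nth 0 (set_nth 0 s a (s`_a - 1)) b (s`_a + 1)].

Definition reach : config -> config -> Prop := clos_refl_trans config topple.

Definition stable (s : config) : bool := uniq s.

(* the stable configuration, read left to right, is 1,2,...,|s|: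
   chip k+1 sits strictly left of chip k+2 for all k *)
Definition reads_identity (s : config) : bool := sorted <%R s.

(* label placed at site i+1 (i : 'I_m) in pi^(r,p): pi_{i+1} if pi_{i+1} < r,
   pi_{i+1}+1 otherwise (pi_{i+1} = val (pi i) + 1 in 1-based notation) *)
Definition chip_at (m : nat) (pi : 'S_m) (r : nat) (i : 'I_m) : nat :=
  let v := (pi i).+1 in if (v < r)%N then v else v.+1.

(* The configuration pi^(r,p): chip r at site p, and at each site i in
   {1..m} the chip chip_at pi r (i-1). *)
Definition init_config (m : nat) (pi : 'S_m) (r p : nat) : config :=
  let L := [seq chip_at pi r i | i <- enum 'I_m] in
  [seq (if c == r then (p%:Z) else ((index c L).+1)%:Z) | c <- iota 1 m.+1].

(* The final configuration of c (unique by the known confluence result) is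
   read as 1,...,m+1. *)
Definition final_is_identity (c : config) : Prop :=
  exists c', reach c c' /\ stable c' /\ reads_identity c'.

Definition Tset (m r p : nat) : {set 'S_m} :=
  [set pi : 'S_m | `[< final_is_identity (init_config pi r p) >]].

(* Toppling is confluent on the configurations met here: at most two chips
   share a site, and between two doubly occupied sites there is an empty one.
   This invariant survives a toppling, and under it two topplings of the same
   configuration either coincide or commute, so whether the final configuration
   reads 1, ..., m+1 can be decided after any sequence of topplings.
   In pi^(1,p), chip 1 travels from site p to site 0 in a wave, each step
   toppling with the chip on its site, and pushes the chips on sites 1..p one
   site to the right.  Writing pi = lift_perm p j s, what remains is chip 1 at
   site 0 followed by s^(j+1,p) shifted by one site.  No chip of s^(j+1,p)
   ever reaches a negative site (at most k chips ever lie left of site k), so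
   after the shift chip 1 stays alone at site 0, never topples again, and pi is
   in T^(1,p) iff s is in T^(j+1,p); summing over j gives the recursion.
   For p = n the wave already ends in a stable configuration, which is sorted
   only when pi = 1. *)

From mathcomp Require Import all_boot all_order all_algebra all_fingroup.
From mathcomp Require Import boolp zify.
From Stdlib Require Import Relations.
Set Implicit Arguments. Unset Strict Implicit. Unset Printing Implicit Defensive.
Import Order.TTheory GRing.Theory Num.Theory.
Local Open Scope ring_scope.

Lemma count_set_nthD (T : Type) (a : pred T) (s : seq T) x0 n x : (n < size s)%N ->
  (count a (set_nth x0 s n x) + a (nth x0 s n) = count a s + a x)%N.
Proof. elim: s n => [|y s IHs] [|n] //= lt_n; last have := IHs n lt_n; lia. Qed.

Lemma leq_size_count_nth (T : eqType) (x0 v : T) (s : seq T) (I : seq nat) : uniq I ->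
  {in I, forall i, (i < size s)%N && (nth x0 s i == v)} -> (size I <= count_mem v s)%N.
Proof.
move=> uniq_I I_v; rewrite -(mkseq_nth x0 s) /mkseq count_map -size_filter.
apply: uniq_leq_size uniq_I _ => i /I_v /andP[lt_i eq_i].
by rewrite mem_filter mem_iota /= eq_i.
Qed.

Lemma card_lift_perm n (i : 'I_n.+1) (A : {set 'S_n.+1}) :
  #|A| = (\sum_(j < n.+1) #|[set s : 'S_n | lift_perm i j s \in A]|)%N.
Proof.
pose f (x : 'I_n.+1 * 'S_n) := lift_perm i x.1 x.2.
have f_inj : injective f.
  move=> [j s] [j' s']; rewrite /f /= => eq_f.
  have eq_j : j = j' by rewrite -(lift_perm_id i j s) eq_f lift_perm_id.
  subst j'; congr (_, _); apply/permP=> k; apply: (@lift_inj _ j).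
  by rewrite -!(lift_perm_lift i) eq_f.
have f_bij : bijective f.
  by apply: inj_card_bij f_inj _; rewrite card_prod !card_Sn card_ord factS.
rewrite -sum1_card (reindex f (onW_bij _ f_bij)).
under [RHS]eq_bigr => j _ do rewrite -sum1_card.
by rewrite pair_big_dep; apply: eq_bigl => -[j s]; rewrite /= inE.
Qed.

(** * Confluence from a local diamond property *)

Section DiamondConfluence.
Variables (T : Type) (R : relation T) (inv : T -> Prop).
Hypothesis inv_step : forall x y, inv x -> R x y -> inv y.
Local Notation rt := (clos_refl_trans T R).
Hypothesis diamond : forall x y1 y2, inv x -> R x y1 -> R x y2 ->
  y1 = y2 \/ exists2 z, R y1 z & R y2 z.

Lemma inv_rt x y : inv x -> rt x y -> inv y.
Proof.
move=> inv_x /(clos_rt_rt1n _ _ _ _) xy; elim: xy inv_x => // {}x x' {}y xx' _ IH inv_x.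
exact: IH (inv_step inv_x xx').
Qed.

Lemma rt_strip x y z : inv x -> rt x y -> R x z ->
  exists2 w, y = w \/ R y w & rt z w.
Proof.
move=> + /(clos_rt_rt1n _ _ _ _) xy; elim: xy z => [{}x|{}x x' {}y xx' x'y IH] z inv_x xz.
  by exists z; [right | apply: rt_refl].
have [<-|[u x'u zu]] := diamond inv_x xx' xz.
  by exists y; [left | exact: clos_rt1n_rt x'y].
have [w yw uw] := IH u (inv_step inv_x xx') x'u.
by exists w => //; apply: rt_trans (rt_step _ _ _ _ zu) uw.
Qed.

Lemma rt_confluent x y z : inv x -> rt x y -> rt x z ->
  exists2 w, rt y w & rt z w.
Proof.
move=> + xy /(clos_rt_rt1n _ _ _ _) xz; elim: xz y xy => [{}x|{}x x' {}z xx' _ IH] y xy inv_x.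
  by exists y; [apply: rt_refl|].
have [w yw x'w] := rt_strip inv_x xy xx'.
have [v wv zv] := IH w x'w (inv_step inv_x xx').
exists v => //; case: yw => [->|yw] //; exact: rt_trans (rt_step _ _ _ _ yw) wv.
Qed.

End DiamondConfluence.

(** * Toppling and the occupancy invariant *)

Definition topple_at (s : config) (a b : nat) : config :=
  set_nth 0 (set_nth 0 s a (s`_a - 1)) b (s`_a + 1).

Lemma toppleP (s t : config) : topple s t <-> exists a b (v : int),
  [/\ (a < b)%N, (b < size s)%N, s`_a = v, s`_b = v & t = topple_at s a b].
Proof.
split=> [[a [b [lt_ab lt_b eq_ab ->]]]|[a [b [v [lt_ab lt_b <- eq_ab ->]]]]].
  by exists a, b, s`_a.
by exists a, b.
Qed.

Definition occupancy (s : config) (x : int) : nat := count_mem x s.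

(* Only used when [f v = 2], so the truncated subtraction is exact. *)
Definition fire (f : int -> nat) (v x : int) : nat :=
  (f x + (x == v - 1)%R + (x == v + 1)%R - 2 * (x == v))%N.

Section ToppleAt.
Variables (s : config) (a b : nat) (v : int).
Hypotheses (lt_ab : (a < b)%N) (lt_b : (b < size s)%N) (s_a : s`_a = v) (s_b : s`_b = v).

Lemma size_topple_at : size (topple_at s a b) = size s.
Proof. by rewrite !size_set_nth (maxn_idPr (ltn_trans lt_ab lt_b)) (maxn_idPr lt_b). Qed.

Lemma nth_topple_at k : (topple_at s a b)`_k =
  if k == b then v + 1 else if k == a then v - 1 else s`_k.
Proof. by rewrite !nth_set_nth /= nth_set_nth s_a. Qed.

Lemma count_topple_at (P : pred int) :
  (count P (topple_at s a b) + 2 * P v = count P s + P (v - 1)%R + P (v + 1)%R)%N.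
Proof.
set s1 := set_nth 0 s a (v - 1).
have lt_a : (a < size s)%N by apply: ltn_trans lt_b.
have s1_b : s1`_b = v by rewrite nth_set_nth /= eq_sym ltn_eqF.
have lt_b_s1 : (b < size s1)%N by rewrite size_set_nth (leq_trans lt_b) ?leq_maxr.
have := count_set_nthD P 0 (v + 1) lt_b_s1.
have := count_set_nthD P 0 (v - 1) lt_a.
rewrite /topple_at s_a -/s1 s1_b => eq1 eq2.
by rewrite mul2n -addnn addnA eq2 addnAC eq1.
Qed.

Lemma occupancy_topple_at : occupancy (topple_at s a b) = fire (occupancy s) v.
Proof.
apply/funext=> x; have := count_topple_at (pred1 x).
rewrite /fire /occupancy /=; lia.
Qed.

Lemma occupancy_topple_site : (2 <= occupancy s v)%N.
Proof.
apply: (leq_size_count_nth (x0 := 0) (I := [:: a; b])) => [|i].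
  by rewrite /= inE ltn_eqF.
by rewrite !inE => /orP[] /eqP->; rewrite ?s_a ?s_b eqxx andbT // (ltn_trans lt_ab).
Qed.

End ToppleAt.

Lemma nth_topple_at_other (s : config) a b k : k != a -> k != b ->
  (topple_at s a b)`_k = s`_k.
Proof.
by move=> /negPf ne_ka /negPf ne_kb; rewrite !nth_set_nth /= ne_kb nth_set_nth /= ne_ka.
Qed.

Lemma topple_atC (s : config) a b c d :
  (a < b)%N -> (b < size s)%N -> (c < d)%N -> (d < size s)%N ->
  [&& c != a, c != b, d != a & d != b] ->
  topple_at (topple_at s a b) c d = topple_at (topple_at s c d) a b.
Proof.
move=> lt_ab lt_b lt_cd lt_d disj.
apply: (@eq_from_nth _ 0) => [|k _]; first by rewrite !size_topple_at ?size_topple_at.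
rewrite !(nth_topple_at _ (erefl _)).
by do !case: eqP => //; lia.
Qed.

Definition sparse (f : int -> nat) : Prop :=
  (forall x, (f x <= 2)%N) /\
  (forall x y, x < y -> f x = 2%N -> f y = 2%N -> exists2 z, x < z < y & f z = 0%N).

Lemma sparse_reflect f : sparse f -> sparse (fun x => f (- x)).
Proof.
move=> [f_le2 f_gap]; split=> // x y lt_xy fx fy.
have [|z lt_z fz] := f_gap (- y) (- x) _ fy fx; first by rewrite ltrN2.
by exists (- z); rewrite ?opprK //; lia.
Qed.

Lemma fire_reflect f v x : fire (fun y => f (- y)) (- v) x = fire f v (- x).
Proof. rewrite /fire; lia. Qed.

Lemma sparse_adjacent f x : sparse f -> f x = 2%N -> f (x + 1) <> 2%N.
Proof. by move=> [_ f_gap] fx fx1; have [|z] := f_gap x (x + 1) _ fx fx1; lia. Qed.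

Lemma fire_gap_left f v x y : sparse f -> f v = 2%N -> x < y < v ->
  fire f v x = 2%N -> fire f v y = 2%N -> exists2 z, x < z < y & fire f v z = 0%N.
Proof.
(* A gap of [f] between x and y, or between x and v if y = v - 1, survives. *)
move=> [_ f_gap] fv lt_xyv; rewrite /fire => fx fy.
have fx' : f x = 2%N by lia.
have [y' [lt_xy' fy' y'_cases]] : exists y', [/\ x < y', f y' = 2%N &
    (y' = v /\ y = v - 1 /\ f (v - 1) = 1%N) \/ (y' = y /\ y < v - 1)].
  case: (eqVneq y (v - 1)) => [ey|ney].
    by subst y; exists v; split=> //; [lia | left; lia].
  by exists y; split; [lia | lia | right; lia].
have [z lt_z fz] := f_gap x y' lt_xy' fx' fy'.
have z_ne : z <> v - 1.
  by case: y'_cases => [[_ [_ fv1]] ez|]; [rewrite ez fv1 in fz | lia].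
by exists z; lia.
Qed.

Lemma sparse_fire f v : sparse f -> f v = 2%N -> sparse (fire f v).
Proof.
move=> f_sp fv; have [f_le2 _] := f_sp.
have fv1 : f (v + 1) <> 2%N by apply: sparse_adjacent.
have fv_1 : f (v - 1) <> 2%N by move/(sparse_adjacent f_sp); rewrite subrK.
have fire_v : fire f v v = 0%N by rewrite /fire; lia.
split=> [x|x y lt_xy fx fy].
  have := f_le2 x; rewrite /fire.
  by case: (eqVneq x (v - 1)) => [->|]; [|case: (eqVneq x (v + 1)) => [->|]]; lia.
have [x_ne y_ne] : x <> v /\ y <> v by split=> e; [move: fx | move: fy]; rewrite e fire_v.
case: (ltrP y v) => [lt_yv | le_vy]; first by apply: fire_gap_left; rewrite ?lt_xy.
case: (ltrP x v) => [lt_xv | le_vx]; first by exists v; [lia | rewrite fire_v].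
(* The case v < x < y is the mirror image of x < y < v. *)
have fv' : f (- - v) = 2%N by rewrite opprK.
have lt' : - y < - x < - v by lia.
have [||z lt_z] := fire_gap_left (sparse_reflect f_sp) fv' lt'.
- by rewrite fire_reflect opprK.
- by rewrite fire_reflect opprK.
rewrite fire_reflect => fz.
by exists (- z) => //; lia.
Qed.

Lemma sparse_topple (s : config) t : sparse (occupancy s) -> topple s t -> sparse (occupancy t).
Proof.
move=> s_sp /toppleP[a [b [v [lt_ab lt_b s_a s_b ->]]]].
rewrite (occupancy_topple_at lt_ab lt_b s_a s_b); apply: sparse_fire => //.
by apply/eqP; rewrite eqn_leq s_sp.1 (occupancy_topple_site lt_ab lt_b s_a s_b).
Qed.

Lemma sparse_cons_uniq x (t : config) : uniq t -> sparse (occupancy (x :: t)).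
Proof.
move=> uniq_t; have occ y : occupancy (x :: t) y = ((x == y) + (y \in t))%N.
  by rewrite /occupancy /= count_uniq_mem.
by split=> [y|y z lt_yz]; rewrite !occ; lia.
Qed.

Lemma topple_diamond (s : config) t1 t2 : sparse (occupancy s) -> topple s t1 -> topple s t2 ->
  t1 = t2 \/ exists2 u, topple t1 u & topple t2 u.
Proof.
move=> [s_le2 _] /toppleP[a [b [v [lt_ab lt_b s_a s_b ->]]]].
move=> /toppleP[c [d [w [lt_cd lt_d s_c s_d ->]]]].
have [lt_a lt_c] : (a < size s)%N /\ (c < size s)%N by split; lia.
(* Two chips at most share a site: topplings on one site use the same pair,
   topplings on different sites use disjoint pairs and commute. *)
case: (eqVneq v w) => [eq_vw | ne_vw].
  have on_v k : (k < size s)%N -> s`_k = v -> (k == a) || (k == b).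
    move=> lt_k s_k; apply/contraT; rewrite negb_or => ne_k.
    suff : (3 <= occupancy s v)%N by have := s_le2 v; lia.
    apply: (leq_size_count_nth (x0 := 0) (I := [:: a; b; k])) => [|i].
      by rewrite /= !inE; lia.
    rewrite /= !inE.
    by case/or3P=> /eqP->; rewrite ?s_a ?s_b ?s_k eqxx andbT; lia.
  have c_ab := on_v c lt_c (etrans s_c (esym eq_vw)).
  have d_ab := on_v d lt_d (etrans s_d (esym eq_vw)).
  by left; have [-> ->] : c = a /\ d = b by lia.
have ne_xy x y : s`_x = v -> s`_y = w -> y != x.
  by move=> s_x s_y; apply: contraNneq ne_vw => eq_yx; rewrite -s_x -s_y eq_yx.
have disj : [&& c != a, c != b, d != a & d != b] by rewrite !ne_xy.
have [/negPf ca /negPf cb /negPf da /negPf db] := and4P disj.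
right; exists (topple_at (topple_at s a b) c d).
  apply/toppleP; exists c, d, w.
  by split; rewrite ?size_topple_at ?nth_topple_at_other ?ca ?cb ?da ?db.
rewrite (topple_atC lt_ab lt_b lt_cd lt_d) //; apply/toppleP; exists a, b, v.
by split; rewrite ?size_topple_at ?nth_topple_at_other // eq_sym ?ca ?da ?cb ?db.
Qed.

Lemma stable_topple (s : config) t : stable s -> ~ topple s t.
Proof.
move=> uniq_s [a [b [lt_ab lt_b eq_ab _]]].
by move: eq_ab => /eqP; rewrite nth_uniq ?(ltn_trans lt_ab) // ltn_eqF.
Qed.

Lemma stable_reach (s : config) t : stable s -> reach s t -> t = s.
Proof. by move=> stable_s /(clos_rt_rt1n _ _ _ _) [] // u v /(stable_topple stable_s). Qed.

Lemma final_is_identity_stable (s : config) : stable s -> final_is_identity s <-> reads_identity s.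
Proof.
move=> stable_s; split=> [[t [/(stable_reach stable_s) -> []]] //|sorted_s].
by exists s; split=> //; apply: rt_refl.
Qed.

Lemma final_is_identity_reach (s : config) t : sparse (occupancy s) -> reach s t ->
  final_is_identity s <-> final_is_identity t.
Proof.
move=> s_sp st; split=> [[u [su [stable_u id_u]]]|[u [tu fu]]].
  have [w uw tw] := rt_confluent sparse_topple topple_diamond s_sp su st.
  by exists u; rewrite (stable_reach stable_u uw) in tw.
by exists u; split=> //; apply: rt_trans st tu.
Qed.

(** * Adding a chip at the origin *)

(* Invariant under toppling that keeps every chip at a nonnegative site. *)
Definition left_bounded (s : config) : Prop :=
  forall k : nat, (count (fun y : int => y < k%:Z)%R s <= k)%N.

Lemma count_lt_succ (s : config) (k : nat) :
  count (fun y : int => y < k.+1%:Z)%R s =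
  (count (fun y : int => y < k%:Z)%R s + occupancy s k%:Z)%N.
Proof. by rewrite /occupancy; elim: s => //= y s ->; lia. Qed.

Lemma left_bounded_topple (s : config) t : left_bounded s -> topple s t -> left_bounded t.
Proof.
move=> s_lb /toppleP[a [b [v [lt_ab lt_b s_a s_b ->]]]] k.
have /= := count_topple_at lt_ab lt_b s_a s_b (fun y : int => y < k%:Z)%R.
(* Only for k = v does the count grow; the two chips on v make room for it. *)
have := occupancy_topple_site lt_ab lt_b s_a s_b; have := s_lb k.+1; have := s_lb k.
rewrite count_lt_succ; have [lt_v|gt_v|->] := ltgtP v k%:Z.
all: lia.
Qed.

Lemma left_bounded_reach (s : config) t : left_bounded s -> reach s t -> left_bounded t.
Proof. exact: (inv_rt left_bounded_topple). Qed.

Lemma left_bounded_perm_eq (s t : config) : perm_eq s t -> left_bounded s -> left_bounded t.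
Proof. by move=> /seq.permP eq_st s_lb k; rewrite -eq_st. Qed.

Lemma left_bounded_ge0 (s : config) : left_bounded s -> {in s, forall y, 0 <= y}.
Proof.
move=> s_lb y y_s; rewrite leNgt; apply/negP => y_neg.
suff : has (fun y : int => y < 0%:Z) s by rewrite has_count; have := s_lb 0%N; lia.
by apply/hasP; exists y.
Qed.

Definition lift_config (s : config) : config := 0 :: [seq y + 1 | y <- s].

Lemma size_lift_config (s : config) : size (lift_config s) = (size s).+1.
Proof. by rewrite /= size_map. Qed.

Lemma nth_lift_config (s : config) k : (k < size s)%N -> (lift_config s)`_k.+1 = s`_k + 1.
Proof. exact: nth_map. Qed.

Lemma lift_topple_at (s : config) a b : (a < b)%N -> (b < size s)%N ->
  lift_config (topple_at s a b) = topple_at (lift_config s) a.+1 b.+1.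
Proof.
move=> lt_ab lt_b; have lt_a := ltn_trans lt_ab lt_b.
have lt_b1 : (b.+1 < size (lift_config s))%N by rewrite size_lift_config.
apply: (@eq_from_nth _ 0) => [|[|k]]; rewrite ?size_topple_at ?size_lift_config ?size_topple_at //.
move=> lt_k; rewrite nth_lift_config ?size_topple_at //.
rewrite !(nth_topple_at _ (erefl _)) !nth_lift_config //.
by do !case: eqP => //; lia.
Qed.

Lemma topple_lift (s : config) t : topple s t -> topple (lift_config s) (lift_config t).
Proof.
move=> /toppleP[a [b [v [lt_ab lt_b s_a s_b ->]]]].
rewrite lift_topple_at //; apply/toppleP; exists a.+1, b.+1, (v + 1).
by split; rewrite ?size_lift_config ?nth_lift_config ?s_a ?s_b // (ltn_trans lt_ab).
Qed.

Lemma reach_lift (s : config) t : reach s t -> reach (lift_config s) (lift_config t).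
Proof.
elim=> [{}s {}t st|{}s|s1 s2 s3 _ IH12 _ IH23].
- exact/rt_step/topple_lift.
- exact: rt_refl.
- exact: rt_trans IH12 IH23.
Qed.

Lemma topple_unlift (s : config) u : left_bounded s -> topple (lift_config s) u ->
  exists2 t, topple s t & u = lift_config t.
Proof.
move=> s_lb /toppleP[a [b [v [lt_ab lt_b s_a s_b ->]]]].
case: b lt_ab lt_b s_b => // b lt_ab; rewrite size_lift_config ltnS => lt_b.
rewrite nth_lift_config // => s_b.
have v_gt0 : 0 < v by rewrite -s_b ltzD1 (left_bounded_ge0 s_lb) ?mem_nth.
case: a lt_ab s_a => [_ s_a|a]; first by rewrite -s_a ltxx in v_gt0.
rewrite ltnS => lt_ab; have lt_a := ltn_trans lt_ab lt_b.
rewrite nth_lift_config // -lift_topple_at // => s_a.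
exists (topple_at s a b) => //; apply/toppleP; exists a, b, (v - 1).
by split=> //; [rewrite -s_a | rewrite -s_b]; rewrite addrK.
Qed.

Lemma reach_unlift (s : config) u : left_bounded s -> reach (lift_config s) u ->
  exists2 t, reach s t & u = lift_config t.
Proof.
move=> s_lb /(clos_rt_rt1n _ _ _ _) su; move E: (lift_config s) su => x su.
elim: su s E s_lb => [y|y z w yz _ IH] s def_y s_lb; subst y.
  by exists s => //; apply: rt_refl.
have [t st def_z] := topple_unlift s_lb yz; subst z.
have [r tr ->] := IH t erefl (left_bounded_topple s_lb st).
by exists r => //; apply: rt_trans (rt_step _ _ _ _ st) tr.
Qed.

Lemma stable_lift (s : config) : {in s, forall y, 0 <= y} -> stable (lift_config s) = stable s.
Proof.
move=> s_ge0; rewrite /stable /= (map_inj_uniq (addIr 1)) andb_idl // => _.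
by apply/mapP=> -[y /s_ge0]; lia.
Qed.

Lemma reads_identity_lift (s : config) : {in s, forall y, 0 <= y} ->
  reads_identity (lift_config s) = reads_identity s.
Proof.
move=> s_ge0; rewrite /reads_identity /= (path_sortedE lt_trans) sorted_map.
rewrite andb_idl; last by move=> _; apply/allP=> _ /mapP[y /s_ge0 y_ge0 ->]; rewrite ltzD1.
by apply: eq_sorted => x y /=; rewrite ltrD2r.
Qed.

Lemma final_is_identity_lift (s : config) : left_bounded s ->
  final_is_identity (lift_config s) <-> final_is_identity s.
Proof.
move=> s_lb; split=> [[_ [/(reach_unlift s_lb)[t st ->] final_t]]|[t [st final_t]]];
  have t_ge0 := left_bounded_ge0 (left_bounded_reach s_lb st).
  by exists t; rewrite -stable_lift // -reads_identity_lift.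
exists (lift_config t); rewrite stable_lift // reads_identity_lift //.
by split=> //; apply: reach_lift.
Qed.

(** * The wave of chip 1 *)

(* Chip 1 at site x, after it has pushed the chips of sites x+1..p one site right. *)
Definition wave_config (p : nat) (t : config) (x : nat) : config :=
  x%:Z :: [seq if x%:Z < q <= p%:Z then q + 1 else q | q <- t].

Lemma wave_config_step p (t : config) x : uniq t -> (x < p)%N -> x.+1%:Z \in t ->
  topple (wave_config p t x.+1) (wave_config p t x).
Proof.
move=> uniq_t lt_xp xt; set i := index x.+1%:Z t.
have lt_i : (i < size t)%N by rewrite index_mem.
have t_i : t`_i = x.+1%:Z by rewrite nth_index.
apply/toppleP; exists 0%N, i.+1, x.+1%:Z; split=> //.
- by rewrite /= size_map.
- by rewrite /= (nth_map 0) // t_i ltxx.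
apply: (@eq_from_nth _ 0) => [|[|k] lt_k]; rewrite ?size_topple_at //= ?size_map //.
  lia.
move: lt_k; rewrite /= size_map ltnS => lt_k.
rewrite nth_set_nth /= !(nth_map 0) //; case: eqP => [->|ne_ki].
  by rewrite t_i; case: ifP; lia.
have : t`_k != x.+1%:Z by rewrite -t_i nth_uniq //; apply/eqP.
by case: ifP; case: ifP; lia.
Qed.

Lemma reach_wave p (t : config) : uniq t -> (forall k, (0 < k <= p)%N -> k%:Z \in t) ->
  reach (p%:Z :: t) (wave_config p t 0).
Proof.
move=> uniq_t t_sites.
have -> : p%:Z :: t = wave_config p t p.
  by congr (_ :: _); rewrite -[LHS]map_id; apply: eq_map => q /=; case: ifP; lia.
suff reach_p_sub k : (k <= p)%N -> reach (wave_config p t p) (wave_config p t (p - k)).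
  by rewrite -(subnn p); apply: reach_p_sub.
elim: k => [_|k IH lt_kp]; first by rewrite subn0; apply: rt_refl.
apply: rt_trans (IH (ltnW lt_kp)) (rt_step _ _ _ _ _).
have -> : (p - k = (p - k.+1).+1)%N by lia.
by apply: wave_config_step; rewrite ?t_sites; lia.
Qed.

(* Sites of chips 2, ..., m+1 in pi^(1,p): chip pi_i + 1 sits at site i. *)
Definition perm_config m (pi : 'S_m) : config :=
  [seq (val ((pi^-1)%g i)).+1%:Z | i <- enum 'I_m].

Section PermConfig.
Variables (m : nat) (pi : 'S_m).

Lemma size_perm_config : size (perm_config pi) = m.
Proof. by rewrite size_map size_enum_ord. Qed.

Lemma nth_perm_config (i : 'I_m) : (perm_config pi)`_i = (val ((pi^-1)%g i)).+1%:Z.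
Proof. by rewrite (nth_map i) ?size_enum_ord // nth_ord_enum. Qed.

Lemma perm_config1 : perm_config (1%g : 'S_m) = [seq k.+1%:Z | k <- iota 0 m].
Proof. by rewrite -val_enum_ord -map_comp; apply: eq_map => i /=; rewrite invg1 perm1. Qed.

Lemma perm_eq_perm_config : perm_eq (perm_config pi) (perm_config (1%g : 'S_m)).
Proof.
rewrite /perm_config (map_comp (fun i : 'I_m => (val i).+1%:Z) (pi^-1)%g).
rewrite [X in perm_eq _ X](eq_map (g := fun i : 'I_m => (val i).+1%:Z)); last first.
  by move=> i; rewrite invg1 perm1.
apply: perm_map.
apply: uniq_perm => [||i]; rewrite ?(map_inj_uniq perm_inj) ?enum_uniq //.
by rewrite mem_enum; apply/mapP; exists (pi i); rewrite ?mem_enum ?permK.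
Qed.

Lemma uniq_perm_config : uniq (perm_config pi).
Proof.
rewrite (perm_uniq perm_eq_perm_config) perm_config1 map_inj_uniq ?iota_uniq //.
by move=> j k /eqP; rewrite eqz_nat => /eqP [].
Qed.

Lemma mem_perm_config y : (y \in perm_config pi) = (0 < y <= m%:Z).
Proof.
rewrite (perm_mem perm_eq_perm_config) perm_config1; apply/mapP/idP => [[k]|y_range].
  by rewrite mem_iota => k_lt ->; lia.
by exists `|y|.-1; rewrite ?mem_iota; lia.
Qed.

Lemma count_lt_perm_config k : (count (fun y : int => y < k%:Z)%R (perm_config pi) <= k.-1)%N.
Proof.
rewrite -size_filter -(size_iota 0 k.-1) -(size_map (fun j => j.+1%:Z)).
apply: uniq_leq_size => [|y]; first by rewrite filter_uniq ?uniq_perm_config.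
rewrite mem_filter mem_perm_config => /andP[lt_yk y_range].
by apply/mapP; exists `|y|.-1; rewrite ?mem_iota; lia.
Qed.

End PermConfig.

Lemma reads_identity_perm_config m (pi : 'S_m) : reads_identity (perm_config pi) = (pi == 1%g).
Proof.
have sorted1 : reads_identity (perm_config (1%g : 'S_m)).
  rewrite /reads_identity perm_config1 sorted_map.
  by apply: sub_sorted (iota_ltn_sorted 0 m) => j k /=; lia.
apply/idP/eqP=> [sorted_pi|->] //.
have eq_pi1 := irr_sorted_eq lt_trans ltxx sorted_pi sorted1 (perm_mem (perm_eq_perm_config pi)).
apply/permP=> i; apply/val_inj; have := congr1 (nth 0 ^~ (pi i)) eq_pi1.
rewrite /= nth_perm_config permK perm_config1 (nth_map 0%N) ?size_iota // nth_iota //.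
by rewrite add0n perm1 => -[] <-.
Qed.

Lemma chip_atE m (pi : 'S_m) r i : chip_at pi r.+1 i = (bump r (pi i)).+1.
Proof. by rewrite /chip_at /bump; case: ltnP; lia. Qed.

Lemma size_init_config m (pi : 'S_m) r p : size (init_config pi r p) = m.+1.
Proof. by rewrite size_map size_iota. Qed.

Section InitConfig.
Variables (m : nat) (pi : 'S_m) (r p : nat).
Hypothesis le_rm : (r <= m)%N.

Lemma nth_init_config k : (k <= m)%N ->
  (init_config pi r.+1 p)`_k = if k == r then p%:Z else (perm_config pi)`_(unbump r k).
Proof.
move=> le_km; rewrite /init_config (nth_map 0%N) ?size_iota // nth_iota // add1n eqSS.
case: eqP => // /eqP ne_kr.
have lt_u : (unbump r k < m)%N by rewrite /unbump; case: ltnP; lia.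
set i := (pi^-1)%g (Ordinal lt_u).
have -> : k.+1 = chip_at pi r.+1 i by rewrite chip_atE permKV /= unbumpK // inE.
rewrite index_map ?index_enum_ord -?(nth_perm_config pi (Ordinal lt_u)) //.
by move=> j1 j2; rewrite !chip_atE => -[] /(can_inj (bumpK r)) /val_inj /perm_inj.
Qed.

Lemma init_configE :
  init_config pi r.+1 p = take r (perm_config pi) ++ p%:Z :: drop r (perm_config pi).
Proof.
have size_take_r : size (take r (perm_config pi)) = r by rewrite size_takel ?size_perm_config.
apply: (@eq_from_nth _ 0) => [|k]; rewrite /init_config size_map size_iota.
  by rewrite size_cat /= size_take_r size_drop size_perm_config; lia.
rewrite ltnS => le_km; rewrite -/(init_config _ _ _) nth_init_config // nth_cat size_take_r.
rewrite /unbump; case: ltngtP => [lt_rk|lt_kr|->]; rewrite ?subnn //.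
  by rewrite -[(k - r)%N]prednK ?subn_gt0 //= nth_drop; congr nth; lia.
by rewrite nth_take // subn0.
Qed.

Lemma perm_eq_init_config : perm_eq (init_config pi r.+1 p) (p%:Z :: perm_config (1%g : 'S_m)).
Proof.
rewrite init_configE -cat1s perm_catCA /= perm_cons cat_take_drop.
exact: perm_eq_perm_config.
Qed.

End InitConfig.

Lemma init_config1 m (pi : 'S_m) p : init_config pi 1 p = p%:Z :: perm_config pi.
Proof. by rewrite init_configE // take0 drop0. Qed.

Lemma left_bounded_perm_config m (pi : 'S_m) : left_bounded (perm_config pi).
Proof. by move=> k; apply: leq_trans (count_lt_perm_config pi k) (leq_pred k). Qed.

Lemma left_bounded_cons_perm_config m (pi : 'S_m) (p : nat) : (0 < p)%N ->
  left_bounded (p%:Z :: perm_config pi).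
Proof. by move=> p_gt0 k /=; have := count_lt_perm_config pi k; lia. Qed.

Lemma Tset1n n : Tset n 1 n = [set 1%g].
Proof.
apply/setP=> pi; rewrite !inE init_config1; apply: (asbool_equiv_eqP eqP).
set X := perm_config pi; have uniq_X : uniq X := uniq_perm_config pi.
have wave_X : wave_config n X 0 = lift_config X.
  by congr (_ :: _); apply/eq_in_map=> q; rewrite mem_perm_config => ->.
have reach_X : reach (n%:Z :: X) (lift_config X).
  by rewrite -wave_X; apply: reach_wave => // k; rewrite mem_perm_config; lia.
apply: iff_trans (final_is_identity_reach (sparse_cons_uniq _ uniq_X) reach_X) _.
apply: iff_trans (final_is_identity_lift (left_bounded_perm_config pi)) _.
apply: iff_trans (final_is_identity_stable uniq_X) _.
by rewrite /X reads_identity_perm_config; split=> /eqP.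
Qed.

Lemma wave_config_lift_perm m (p0 j : 'I_m.+1) (s : 'S_m) :
  wave_config p0 (perm_config (lift_perm p0 j s)) 0 = lift_config (init_config s j.+1 p0).
Proof.
have le_jm : (j <= m)%N by rewrite -ltnS.
congr (_ :: _); apply: (@eq_from_nth _ 0) => [|k].
  by rewrite size_map size_perm_config size_map size_init_config.
rewrite size_map size_perm_config => lt_k; pose i := Ordinal lt_k.
rewrite -[k]/(nat_of_ord i) (nth_map 0) ?size_perm_config // nth_perm_config.
rewrite (nth_map 0) ?size_init_config // lift_permV nth_init_config // -?ltnS //.
have [u ->|->] := unliftP j i; last by rewrite lift_perm_id eqxx /=; case: ifP; lia.
rewrite lift_perm_lift ifN_eqC ?neq_lift //= bumpK nth_perm_config /bump /=.
by case: ifP; lia.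
Qed.

Lemma mem_Tset_lift_perm m (p0 j : 'I_m.+1) (s : 'S_m) : (0 < p0)%N ->
  (lift_perm p0 j s \in Tset m.+1 1 p0) = (s \in Tset m j.+1 p0).
Proof.
move=> p0_gt0; rewrite !inE init_config1; apply: asbool_equiv_eq.
set X := perm_config (lift_perm p0 j s); have uniq_X : uniq X := uniq_perm_config _.
have D_lb : left_bounded (init_config s j.+1 p0).
  apply: left_bounded_perm_eq (left_bounded_cons_perm_config (1%g : 'S_m) p0_gt0).
  by rewrite perm_sym; apply: perm_eq_init_config; rewrite -ltnS.
have reach_D : reach (p0%:Z :: X) (lift_config (init_config s j.+1 p0)).
  rewrite -wave_config_lift_perm; apply: reach_wave => // k.
  by rewrite mem_perm_config; have := ltn_ord p0; lia.
apply: iff_trans (final_is_identity_reach (sparse_cons_uniq _ uniq_X) reach_D) _.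
exact: final_is_identity_lift.
Qed.

Theorem proposition4p6 :
  (forall n : nat, (1 <= n)%N -> #|Tset n 1 n| = 1%N) /\
  (forall n p : nat, (2 <= n)%N -> (1 <= p <= n.-1)%N ->
     #|Tset n 1 p| = (\sum_(1 <= r < n.+1) #|Tset n.-1 r p|)%N).
Proof.
split=> [n _|[//|m] p _ /andP[p_gt0 le_pm]]; first by rewrite Tset1n cards1.
have lt_p : (p < m.+1)%N by rewrite ltnS.
rewrite -[p]/(nat_of_ord (Ordinal lt_p)) (card_lift_perm (Ordinal lt_p)) big_add1 big_mkord.
by apply: eq_bigr => j _; apply: eq_card => s; rewrite inE mem_Tset_lift_perm.
Qed.
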